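(* Let $k$ be an algebraically closed field, $\beta$ a basis set of $n$ monomials in $k[x_1,\dots,x_r]$, $R$ the coordinate ring of $U_\beta$ and $M\subseteq R$ the maximal ideal of the point $t_\beta$. Let $S$ be a finite set of $d$ arrows $c^{\mathbf d}_{\mathbf j}$ for $\beta$. Then the $k$-span of (the images of) $S$ in $M/M^2$ has dimension $d$ if and only if both of the following hold: (a) $c^{\mathbf d}_{\mathbf j}\not\sim 0$ for every $c^{\mathbf d}_{\mathbf j}\in S$; (b) $c^{\mathbf d_1}_{\mathbf j_1}\not\sim c^{\mathbf d_2}_{\mathbf j_2}$ for all distinct $c^{\mathbf d_1}_{\mathbf j_1}\neq c^{\mathbf d_2}_{\mathbf j_2}$ in $S$.
   Context: Monomials $\mathbf x^{\mathbf d}=x_1^{d_1}\cdots x_r^{d_r}$ are identified with exponent vectors $\mathbf d\in\mathbb Z_{\ge0}^r$. A basis set is a finite nonempty set $\beta$ of monomials such that $m_1\in\beta$, $m_2\mid m_1$ implies $m_2\in\beta$; $I_\beta$ is the ideal generated by all monomials not in $\beta$ (colength $n=|\beta|$). $\mathbf H^n$ is the Hilbert scheme of $n$ points of $\mathbb A^r_k$, $t_\beta$ the point corresponding to $I_\beta$, and $U_\beta\subseteq\mathbf H^n$ the open affine subscheme of points $t$ for which $\beta$ is a $k$-basis of $k[\mathbf x]/I_t$, with coordinate ring $R$. For $\mathbf x^{\mathbf d}\notin\beta$, $\mathbf x^{\mathbf j}\in\beta$, $c^{\mathbf d}_{\mathbf j}\in R$ is the function with $\mathbf x^{\mathbf d}-\sum_{\mathbf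 j\in\beta}c^{\mathbf d}_{\mathbf j}(t)\mathbf x^{\mathbf j}\in I_t$ for all $t\in U_\beta$; $M$ is the maximal ideal of $t_\beta$ (generated by these functions). An arrow is such a pair $(\mathbf d,\mathbf j)$ (tail $\mathbf x^{\mathbf d}\notin\beta$, head $\mathbf x^{\mathbf j}\in\beta$), denoted and identified with $c^{\mathbf d}_{\mathbf j}$. A translation step replaces $(\mathbf d,\mathbf j)$ by $(\mathbf d\pm e_i,\mathbf j\pm e_i)$ for some $i$, provided the result is again an arrow (nonnegative exponents, head in $\beta$, tail not in $\beta$); two arrows are translation-equivalent ($\sim$) if one is reachable from the other by finitely many steps. We write $c\sim0$ if $c$ is translation-equivalent to an arrow $(\mathbf d',\mathbf j')$ such that for some $i$: $j'_i=0$, $d'_i\ge1$ and $\mathbf x^{\mathbf d'-e_i}\notin\beta$ (i.e. one more step in the decreasing $x_i$-direction would move the head out of the first orthant while the tail stays outside $\beta$). *)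

From HB Require Import structures.
From mathcomp Require Import all_boot all_order all_algebra.
From mathcomp Require Import finmap.
From mathcomp Require Import mpoly.
From Stdlib Require Import Relations.


Unset Strict Implicit.
Unset Printing Implicit Defensive.

Import GRing.Theory.
Local Open Scope fset_scope.
Local Open Scope ring_scope.

(* Exponent vectors d in Z_{>=0}^r, i.e. monomials x^d of k[x_1..x_r]. *)
Definition mon (r : nat) := {ffun 'I_r -> nat}.

Definition madd {r : nat} (d : mon r) (i : 'I_r) : mon r :=
  [ffun l => (d l + (l == i))%N].
(* d - e_i (only used when d_i >= 1) *)
Definition msub {r : nat} (d : mon r) (i : 'I_r) : mon r :=
  [ffun l => (d l - (l == i))%N].
Definition mzero r : mon r := [ffun _ => 0%N].

Definition basis_set {r : nat} (B : {fset mon r}) : Prop :=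
  B != fset0 /\
  forall m1 m2 : mon r, m1 \in B -> (forall i, (m2 i <= m1 i)%N) -> m2 \in B.

Definition arrow {r : nat} (B : {fset mon r}) (a : mon r * mon r) : bool :=
  (a.1 \notin B) && (a.2 \in B).

Definition border {r : nat} (B : {fset mon r}) : seq (mon r) :=
  undup [seq d <- [seq madd b i | b <- enum_fset B, i <- enum 'I_r] | d \notin B].

(* Variables c^d_j of the ambient polynomial ring: d in the border, j in beta. *)
Definition vars {r : nat} (B : {fset mon r}) : seq (mon r * mon r) :=
  [seq (d, j) | d <- border B, j <- enum_fset B].

Definition nvars {r : nat} (B : {fset mon r}) : nat := size (vars B).

Definition Pring (k : fieldType) {r : nat} (B : {fset mon r}) := {mpoly k[nvars B]}.

Definition varP (k : fieldType) {r : nat} (B : {fset mon r}) (x : mon r * mon r)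
  : Pring k B :=
  match insub (index x (vars B)) with
  | Some i => 'X_i
  | None => 0
  end.

(* Coefficient of x^j in x_i * x^b in k[x]/I_t (for b, j in beta):
   the matrix entry of multiplication by x_i, as a function on U_beta. *)
Definition mulcoef (k : fieldType) {r : nat} (B : {fset mon r}) (i : 'I_r) (b j : mon r)
  : Pring k B :=
  if madd b i \in B then ((madd b i == j)%:R) else varP k B (madd b i, j).

Definition mulx (k : fieldType) {r : nat} (B : {fset mon r}) (i : 'I_r)
  (v : mon r -> Pring k B) : mon r -> Pring k B :=
  fun j => \sum_(b <- enum_fset B) v b * mulcoef k B i b j.

Definition unitv (k : fieldType) {r : nat} (B : {fset mon r}) (u : mon r)
  : mon r -> Pring k B := fun j => ((j == u)%:R).

(* Generators of the ideal I defining U_beta: entries of the commutators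
   [X_a, X_b] of the multiplication matrices. *)
Definition commgen (k : fieldType) {r : nat} (B : {fset mon r}) (a b : 'I_r) (u j : mon r)
  : Pring k B :=
  mulx k B a (mulx k B b (unitv k B u)) j - mulx k B b (mulx k B a (unitv k B u)) j.

(* Normal form of x^d: coordinates of x^d mod I_t in the basis beta,
   computed as X_1^{d_1} ... X_r^{d_r} applied to 1 = x^0. *)
Definition nform (k : fieldType) {r : nat} (B : {fset mon r}) (d : mon r)
  : mon r -> Pring k B :=
  foldr (fun l v => iter (d l) (mulx k B l) v) (unitv k B (mzero r)) (enum 'I_r).

(* The function c^d_j (represented in the ambient polynomial ring). *)
Definition cfun (k : fieldType) {r : nat} (B : {fset mon r}) (a : mon r * mon r)
  : Pring k B := nform k B a.1 a.2.

(* f lies in m^2 + I, where m = (all variables) is the ideal of t_beta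
   (all c^d_j = 0) in the ambient ring; i.e. the image of f in R lies in M^2. *)
Definition in_M2 (k : fieldType) {r : nat} (B : {fset mon r}) (f : Pring k B) : Prop :=
  exists (g : 'I_r -> 'I_r -> mon r -> mon r -> Pring k B)
         (q : 'I_(nvars B) -> 'I_(nvars B) -> Pring k B),
    f = \sum_(a < r) \sum_(b < r) \sum_(u <- enum_fset B) \sum_(j <- enum_fset B)
            g a b u j * commgen k B a b u j
        + \sum_(i < nvars B) \sum_(l < nvars B) q i l * 'X_i * 'X_l.

(* The images of the arrows in S are k-linearly independent in M/M^2,
   i.e. their k-span in M/M^2 has dimension #|S|. *)
Definition indep_cotangent (k : fieldType) {r : nat} (B : {fset mon r})
  (S : {fset mon r * mon r}) : Prop :=
  forall a : mon r * mon r -> k,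
    in_M2 k B (\sum_(s <- enum_fset S) a s *: cfun k B s) ->
    forall s, s \in S -> a s = 0.

Definition tstep {r : nat} (B : {fset mon r}) (a b : mon r * mon r) : Prop :=
  arrow B a /\ arrow B b /\
  exists i : 'I_r,
    (b.1 = madd a.1 i /\ b.2 = madd a.2 i) \/
    (a.1 = madd b.1 i /\ a.2 = madd b.2 i).

Definition tequiv {r : nat} (B : {fset mon r}) : relation (mon r * mon r) :=
  clos_refl_trans (mon r * mon r) (tstep B).

Definition sim0 {r : nat} (B : {fset mon r}) (a : mon r * mon r) : Prop :=
  exists a' : mon r * mon r, tequiv B a a' /\
    exists i : 'I_r, a'.2 i = 0%N /\ (1 <= a'.1 i)%N /\ msub a'.1 i \notin B.

(* Independence in M/M^2 is tested by tangent vectors at t_beta, i.e. by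
   k[e]/(e^2)-points of U_beta over t_beta.  Given a function phi on arrows,
   sending every c^d_j to phi(d, j) e yields such a point as soon as phi is
   invariant under translation steps and vanishes on arrows whose next step
   down leaves the first orthant: the e-part of the normal form of x^d is then
   phi(d, -), so the multiplication matrices still commute modulo e^2.  The
   indicator of the translation class of an arrow s that is not ~ 0 thus
   separates s from all arrows of S not equivalent to it.
   Conversely, x_i NF(x^d) = NF(x^(d + e_i)) modulo the commutator relations,
   and for x^d outside beta the left side is, modulo M^2, the normal form of
   x^d shifted by e_i.  Hence a translation step does not change c^d_j modulo
   M^2, and an arrow whose next step down leaves the orthant lies in M^2. *)

From HB Require Import structures.
From mathcomp Require Import all_boot all_order all_algebra.
From mathcomp Require Import finmap.
From mathcomp Require Import mpoly.
From Stdlib Require Import Relations ClassicalEpsilon.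

Set Implicit Arguments.
Unset Strict Implicit.
Unset Printing Implicit Defensive.
Import GRing.Theory.
Local Open Scope fset_scope.
Local Open Scope ring_scope.

Lemma sum_seq_single (T : eqType) (V : nmodType) (s : seq T) (y : T) (F : T -> V) :
  uniq s -> y \in s -> (forall x, x \in s -> x != y -> F x = 0) ->
  \sum_(x <- s) F x = F y.
Proof.
move=> s_uniq ys F0; rewrite (bigD1_seq y) //= big1_seq ?addr0 // => x /andP[].
by move=> xy xs; apply: F0.
Qed.

Lemma sum_seq_pick (T : eqType) (V : nmodType) (s : seq T) (y : T) (G : T -> V) :
  uniq s -> y \in s -> \sum_(x <- s) (if x == y then G x else 0) = G y.
Proof.
move=> s_uniq ys; rewrite (sum_seq_single s_uniq ys) ?eqxx // => x _.
by move/negbTE->.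
Qed.

Section Monomials.
Variable r : nat.
Implicit Types (m : mon r) (i l : 'I_r).

Lemma madd_self m i : madd m i i = (m i).+1.
Proof. by rewrite ffunE eqxx addn1. Qed.

Lemma maddK m i : msub (madd m i) i = m.
Proof. by apply/ffunP => l; rewrite !ffunE addnK. Qed.

Lemma msubK m i : (0 < m i)%N -> madd (msub m i) i = m.
Proof.
move=> m_i; apply/ffunP => l; rewrite !ffunE; case: eqP => [->|_].
  by rewrite subn1 addn1 prednK.
by rewrite subn0 addn0.
Qed.

Lemma maddAC m i l : madd (madd m i) l = madd (madd m l) i.
Proof. by apply/ffunP => x; rewrite !ffunE addnAC. Qed.

End Monomials.

Section BasisSet.
Variables (r : nat) (B : {fset mon r}).
Hypothesis basisB : basis_set B.
Implicit Types (m : mon r) (i : 'I_r).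

Lemma madd_notin m i : m \notin B -> madd m i \notin B.
Proof.
move=> mB; apply: contra mB => /(basisB.2 _ m); apply=> l.
by rewrite ffunE leq_addr.
Qed.

Lemma msub_in m i : m \in B -> msub m i \in B.
Proof. by move/(basisB.2 _ (msub m i)); apply=> l; rewrite ffunE leq_subr. Qed.

Lemma mzero_in : mzero r \in B.
Proof.
have [m mB] := fset0Pn _ basisB.1.
by apply: (basisB.2 m) => // l; rewrite ffunE.
Qed.

Lemma sum_madd_eq (V : nmodType) (F : mon r -> V) (j : mon r) i : j \in B ->
  \sum_(b <- enum_fset B) (if madd b i == j then F b else 0)
  = if (0 < j i)%N then F (msub j i) else 0.
Proof.
move=> jB; case: ifP => j_i.
  rewrite -(sum_seq_pick F (fset_uniq B) (msub_in i jB)).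
  apply: eq_bigr => b _; congr (if _ then _ else _).
  by apply/eqP/eqP => [<-|->]; [rewrite maddK | rewrite msubK].
rewrite big1 // => b _; case: eqP => // bj.
by move: j_i; rewrite -bj madd_self.
Qed.

End BasisSet.

Section AmbientVariables.
Variables (k : fieldType) (r : nat) (B : {fset mon r}).

Lemma mem_border (b : mon r) i : b \in B -> madd b i \notin B -> madd b i \in border B.
Proof.
move=> bB biB; rewrite /border mem_undup mem_filter biB /=.
by apply/allpairsP; exists (b, i); rewrite /= mem_enum.
Qed.

Lemma mem_vars (d j : mon r) : d \in border B -> j \in B -> (d, j) \in vars B.
Proof. by move=> dB jB; apply/allpairsP; exists (d, j). Qed.

Lemma varP_var (x : mon r * mon r) : x \in vars B ->
  exists i : 'I_(nvars B), varP k B x = 'X_i /\ nth (mzero r, mzero r) (vars B) i = x.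
Proof.
move=> xv; have lt_x : (index x (vars B) < nvars B)%N by rewrite /nvars index_mem.
by exists (Ordinal lt_x); rewrite /varP insubT /= nth_index.
Qed.

Lemma varP_notin (x : mon r * mon r) : x \notin vars B -> varP k B x = 0.
Proof.
move=> xv; rewrite /varP insubF //; apply/negbTE; rewrite -leqNgt /nvars.
by rewrite (memNindex xv).
Qed.

End AmbientVariables.

Section OriginIdeal.
Variables (k : fieldType) (r : nat) (B : {fset mon r}).
Local Notation P := (Pring k B).

Definition in_m (f : P) : Prop := exists h : 'I_(nvars B) -> P, f = \sum_i h i * 'X_i.

Lemma in_m_varP x : in_m (varP k B x).
Proof.
have [xv|xNv] := boolP (x \in vars B); last first.
  by exists (fun=> 0); rewrite varP_notin // big1 // => i _; rewrite mul0r.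
have [i [-> _]] := varP_var k xv; exists (fun l => (l == i)%:R).
rewrite (sum_seq_single (index_enum_uniq _) (mem_index_enum i)) ?eqxx ?mul1r //.
by move=> l _ /negbTE->; rewrite mul0r.
Qed.

Lemma mpolyX_in_m (m : 'X_{1..nvars B}) : m != 0%MM -> in_m 'X_[m].
Proof.
move=> mN0; have /existsP[i m_i] : [exists i, 0 < m i]%N.
  apply: contraNT mN0 => /existsPn m0; apply/eqP/mnmP => i.
  by rewrite mnm0E; apply/eqP; rewrite -leqn0 leqNgt m0.
exists (fun l => (l == i)%:R * 'X_[m - U_(i)]).
rewrite (sum_seq_single (index_enum_uniq _) (mem_index_enum i)) ?eqxx ?mul1r.
  rewrite -mpolyXD submK //; apply/mnm_lepP => l.
  by rewrite mnm1E; case: eqP => [<-|].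
by move=> l _ /negbTE->; rewrite !mul0r.
Qed.

Lemma mpoly_coef0_decomp (f : P) : exists h : 'I_(nvars B) -> P,
  f = (f@_0)%:MP + \sum_i h i * 'X_i.
Proof.
elim/mpolyind: f => [|c m p _ _ [h hp]].
  by exists (fun=> 0); rewrite mcoeff0 mpolyC0 add0r big1 // => i _; rewrite mul0r.
rewrite mcoeffD mcoeffZ mcoeffX.
have [->|mN0] := eqVneq m 0%MM.
  by exists h; rewrite mulr1 mpolyCD {1}hp mpolyX0 addrA alg_mpolyC.
have [g ->] := mpolyX_in_m mN0.
exists (fun i => c *: g i + h i); rewrite mulr0 add0r {1}hp.
rewrite addrCA scaler_sumr -big_split /=; congr (_ + _); apply: eq_bigr => i _.
by rewrite mulrDl scalerAl.
Qed.

End OriginIdeal.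

Lemma coef1M (R : nzRingType) (p q : {poly R}) :
  (p * q)`_1 = p`_0 * q`_1 + p`_1 * q`_0.
Proof. by rewrite coefM big_ord_recr big_ord_recr big_ord0 /= add0r. Qed.

Lemma coef_natr (R : nzRingType) (n i : nat) :
  (n%:R : {poly R})`_i = if i == 0%N then n%:R else 0.
Proof. by rewrite -polyC_natr coefC. Qed.

Definition nform_seq (k : fieldType) (r : nat) (B : {fset mon r}) (d : mon r)
    (s : seq 'I_r) : mon r -> Pring k B :=
  foldr (fun l v => iter (d l) (mulx k B l) v) (unitv k B (mzero r)) s.

Definition mon_seq (r : nat) (d : mon r) (s : seq 'I_r) : mon r :=
  foldr (fun l m => iter (d l) (madd^~ l) m) (mzero r) s.

Lemma mon_seqE r (d : mon r) s x : mon_seq d s x = (count_mem x s * d x)%N.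
Proof.
have iterE n l (m : mon r) : iter n (madd^~ l) m x = (m x + n * (x == l))%N.
  by elim: n m => [|n IHn] m /=; rewrite ?mul0n ?addn0 // ffunE IHn mulSn addnAC addnA.
elim: s => [|l s IH] /=; first by rewrite ffunE.
rewrite iterE IH eq_sym; case: eqP => [->|_] /=.
  by rewrite muln1 mulSn addnC.
by rewrite muln0 addn0.
Qed.

Lemma mon_seq_enum r (d : mon r) : mon_seq d (enum 'I_r) = d.
Proof.
by apply/ffunP => x; rewrite mon_seqE count_uniq_mem ?enum_uniq // mem_enum mul1n.
Qed.

(* Only the coefficients of 1 and 'X matter below: {poly k} stands for the
   dual numbers k[e]/(e^2), and tangent_var phi sends c^d_j to phi(d, j) e. *)
Section TangentVector.
Variables (k : fieldType) (r : nat) (B : {fset mon r}) (phi : mon r * mon r -> k).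

Definition tangent_var (i : 'I_(nvars B)) : {poly k} :=
  (phi (nth (mzero r, mzero r) (vars B) i))%:P * 'X.

Local Notation E := (mmap (@polyC k) tangent_var).

Lemma tangent_var_coef0 i : (tangent_var i)`_0 = 0.
Proof. by rewrite coefMX. Qed.

Lemma tangent_coef0 (f : Pring k B) : (E f)`_0 = f@_0.
Proof.
have [h {1}->] := mpoly_coef0_decomp f.
rewrite rmorphD rmorph_sum /= mmapC coefD coefC coef_sum big1 ?addr0 // => i _.
by rewrite rmorphM /= mmapX mmap1U coef0M tangent_var_coef0 mulr0.
Qed.

Definition tangent_lift (m : mon r) (v : mon r -> Pring k B) : Prop :=
  forall j, j \in B -> (E (v j))`_0 = (m == j)%:R /\ (E (v j))`_1 = phi (m, j).

Hypothesis basisB : basis_set B.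
Hypothesis phi_arrow : forall t, ~~ arrow B t -> phi t = 0.
Hypothesis phi_translate : forall (m : mon r) l (j : mon r), m \notin B -> j \in B ->
  phi (madd m l, j) = if (0 < j l)%N then phi (m, msub j l) else 0.

Lemma tangent_lift_unitv u : u \in B -> tangent_lift u (unitv k B u).
Proof.
move=> uB j jB; rewrite /unitv rmorph_nat !coef_natr /= eq_sym; split=> //.
by rewrite phi_arrow // /arrow uB.
Qed.

Lemma tangent_mulcoef l (b j : mon r) : b \in B -> j \in B ->
  (E (mulcoef k B l b j))`_0 = (madd b l == j)%:R /\
  (E (mulcoef k B l b j))`_1 = phi (madd b l, j).
Proof.
move=> bB jB; rewrite /mulcoef; case: ifP => blB.
  by rewrite rmorph_nat !coef_natr phi_arrow // /arrow blB.
have [i [-> xi]] := varP_var k (mem_vars (mem_border bB (negbT blB)) jB).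
rewrite mmapX mmap1U /tangent_var xi !coefMX /= !coefC /=; split=> //.
by case: eqP => // blj; move: blB; rewrite blj jB.
Qed.

Lemma tangent_lift_mulx (m : mon r) l v :
  tangent_lift m v -> tangent_lift (madd m l) (mulx k B l v).
Proof.
move=> liftv j jB; rewrite /mulx rmorph_sum !coef_sum.
have sum_m (V : nmodType) (F : mon r -> V) :
    \sum_(b <- enum_fset B) (if m == b then F b else 0) = if m \in B then F m else 0.
  case: ifP => mB.
    by rewrite -(sum_seq_pick F (fset_uniq B) mB); apply: eq_bigr => b _; rewrite eq_sym.
  by rewrite big1_seq // => b /andP[_ bB]; case: eqP => // mb; move: mB; rewrite mb bB.
have coef0_term b : b \in enum_fset B ->
    (E (v b * mulcoef k B l b j))`_0 = if m == b then (madd b l == j)%:R else 0.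
  move=> bB; have [v0 _] := liftv b bB; have [c0 _] := tangent_mulcoef l bB jB.
  by rewrite rmorphM coef0M v0 c0; case: eqP; rewrite ?mul1r ?mul0r.
have coef1_term b : b \in enum_fset B ->
    (E (v b * mulcoef k B l b j))`_1 = (if m == b then phi (madd b l, j) else 0)
      + (if madd b l == j then phi (m, b) else 0).
  move=> bB; have [v0 v1] := liftv b bB; have [c0 c1] := tangent_mulcoef l bB jB.
  rewrite rmorphM coef1M v0 v1 c0 c1.
  by congr (_ + _); case: eqP; rewrite ?mul1r ?mul0r ?mulr1 ?mulr0.
rewrite (eq_big_seq _ coef0_term) (eq_big_seq _ coef1_term).
rewrite big_split /= (sum_madd_eq basisB (fun b => phi (m, b)) l jB).
rewrite sum_m (sum_m _ (fun b => phi (madd b l, j))); case: ifP => mB; split.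
- by [].
- by case: ifP => _; rewrite ?addr0 // [phi (m, _)]phi_arrow ?addr0 // /arrow mB.
- by case: eqP => // mlj; have := madd_notin basisB l (negbT mB); rewrite mlj jB.
- by rewrite add0r phi_translate // mB.
Qed.

Lemma tangent_lift_nform_seq (d : mon r) s :
  tangent_lift (mon_seq d s) (nform_seq k B d s).
Proof.
elim: s => [|l s IH] /=; first exact: tangent_lift_unitv (mzero_in basisB).
by elim: (d l) => //= n IHn; apply: tangent_lift_mulx.
Qed.

Lemma tangent_lift_nform (d : mon r) : tangent_lift d (nform k B d).
Proof. by rewrite -{1}(mon_seq_enum d); apply: tangent_lift_nform_seq. Qed.

Lemma tangent_commgen a b (u j : mon r) : u \in B -> j \in B ->
  (E (commgen k B a b u j))`_0 = 0 /\ (E (commgen k B a b u j))`_1 = 0.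
Proof.
move=> uB jB; rewrite /commgen rmorphB !coefB.
have := tangent_lift_mulx a (tangent_lift_mulx b (tangent_lift_unitv uB)) jB.
have := tangent_lift_mulx b (tangent_lift_mulx a (tangent_lift_unitv uB)) jB.
by rewrite maddAC => -[-> ->] [-> ->]; rewrite !subrr.
Qed.

Lemma tangent_coef1_M2 f : in_M2 k B f -> (E f)`_1 = 0.
Proof.
case=> g [q ->]; rewrite rmorphD coefD !rmorph_sum !coef_sum.
rewrite big1 ?add0r => [|a _].
  rewrite big1 // => i _; rewrite rmorph_sum coef_sum big1 // => l _.
  rewrite !rmorphM /= !mmapX !mmap1U coef1M coef0M !tangent_var_coef0.
  by rewrite !mulr0 mul0r add0r.
rewrite rmorph_sum coef_sum big1 // => b _.
rewrite rmorph_sum coef_sum big1_seq // => u /andP[_ uB].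
rewrite rmorph_sum coef_sum big1_seq // => j /andP[_ jB].
have [c0 c1] := tangent_commgen a b uB jB.
by rewrite rmorphM coef1M c0 c1 !mulr0 addr0.
Qed.

Lemma tangent_coef1_cfun (t : mon r * mon r) : t.2 \in B -> (E (cfun k B t))`_1 = phi t.
Proof. by case: t => d j /= jB; have [_ ->] := tangent_lift_nform d jB. Qed.

End TangentVector.

Lemma tstep_sym r (B : {fset mon r}) a b : tstep B a b -> tstep B b a.
Proof.
by case=> aA [bA [i ab]]; do 2!split=> //; exists i; rewrite or_comm.
Qed.

Lemma tequiv_arrow r (B : {fset mon r}) a b : tequiv B a b -> arrow B a -> arrow B b.
Proof. by elim=> [x y [_ []]|x|x y z _ IHxy _ IHyz] // /IHxy /IHyz. Qed.

Definition iverson (R : nzRingType) (P : Prop) : R :=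
  if excluded_middle_informative P then 1 else 0.

Lemma iversonT (R : nzRingType) (P : Prop) : P -> iverson R P = 1.
Proof. by rewrite /iverson; case: excluded_middle_informative. Qed.

Lemma iversonF (R : nzRingType) (P : Prop) : ~ P -> iverson R P = 0.
Proof. by rewrite /iverson; case: excluded_middle_informative. Qed.

Lemma eq_iverson (R : nzRingType) (P Q : Prop) : (P <-> Q) -> iverson R P = iverson R Q.
Proof.
move=> PQ; have [p|np] := excluded_middle_informative P.
  by rewrite !iversonT //; apply/PQ.
by rewrite !iversonF // => /PQ.
Qed.

Section TranslationClass.
Variables (k : fieldType) (r : nat) (B : {fset mon r}) (s : mon r * mon r).
Hypotheses (basisB : basis_set B) (s_arrow : arrow B s) (s_not0 : ~ sim0 B s).

Definition class_ind (t : mon r * mon r) : k := iverson k (tequiv B s t).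

Lemma class_ind_arrow t : ~~ arrow B t -> class_ind t = 0.
Proof. by move=> /negP tA; rewrite /class_ind iversonF // => /tequiv_arrow; auto. Qed.

Lemma class_ind_translate (m : mon r) l (j : mon r) : m \notin B -> j \in B ->
  class_ind (madd m l, j) = if (0 < j l)%N then class_ind (m, msub j l) else 0.
Proof.
move=> mB jB; case: ifP => j_l.
  have step : tstep B (m, msub j l) (madd m l, j).
    split; first by rewrite /arrow mB msub_in.
    split; first by rewrite /arrow madd_notin.
    by exists l; left; rewrite msubK.
  apply: eq_iverson; split=> es; apply: rt_trans es _; apply: rt_step => //.
  exact: tstep_sym.
apply: iversonF => es; apply: s_not0; exists (madd m l, j); split=> //.
by exists l; rewrite /= madd_self maddK; split; [case: (j l) j_l|].
Qed.

End TranslationClass.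

Lemma indep_cotangent_of_classes (k : fieldType) r (B : {fset mon r})
    (S : {fset mon r * mon r}) : basis_set B ->
  (forall s, s \in S -> arrow B s) ->
  (forall s, s \in S -> ~ sim0 B s) ->
  (forall s1 s2, s1 \in S -> s2 \in S -> s1 <> s2 -> ~ tequiv B s1 s2) ->
  indep_cotangent k B S.
Proof.
move=> basisB S_arrow S_not0 S_apart a aM s sS.
have phi_arrow := class_ind_arrow k (S_arrow s sS).
have phi_translate := class_ind_translate k basisB (S_not0 s sS).
have := tangent_coef1_M2 basisB phi_arrow phi_translate aM.
rewrite rmorph_sum coef_sum (eq_big_seq (fun t => if t == s then a t else 0)).
  by rewrite sum_seq_pick.
move=> t tS; have tB : t.2 \in B by case/andP: (S_arrow t tS).
rewrite /= mmapZ coefCM (tangent_coef1_cfun basisB phi_arrow phi_translate tB).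
rewrite /class_ind; case: eqP => [->|ts].
  by rewrite iversonT ?mulr1 //; apply: rt_refl.
by rewrite iversonF ?mulr0 // => /(S_apart s t sS tS (nesym ts)).
Qed.

Section CotangentRelations.
Variables (k : fieldType) (r : nat) (B : {fset mon r}).
Local Notation P := (Pring k B).
Local Notation M2 := (in_M2 k B).

Lemma in_M2D f g : M2 f -> M2 g -> M2 (f + g).
Proof.
case=> g1 [q1 ->] [g2 [q2 ->]].
exists (fun a b u j => g1 a b u j + g2 a b u j), (fun i l => q1 i l + q2 i l).
rewrite addrACA; congr (_ + _); rewrite -big_split; apply: eq_bigr => a _;
  rewrite -big_split; apply: eq_bigr => b _; last by rewrite !mulrDl.
rewrite -big_split; apply: eq_bigr => u _; rewrite -big_split; apply: eq_bigr => j _.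
by rewrite mulrDl.
Qed.

Lemma in_M2Ml h f : M2 f -> M2 (h * f).
Proof.
case=> g [q ->]; exists (fun a b u j => h * g a b u j), (fun i l => h * q i l).
rewrite mulrDr; congr (_ + _); rewrite mulr_sumr; apply: eq_bigr => a _;
  rewrite mulr_sumr; apply: eq_bigr => b _; last by rewrite !mulrA.
rewrite mulr_sumr; apply: eq_bigr => u _; rewrite mulr_sumr; apply: eq_bigr => j _.
by rewrite mulrA.
Qed.

Lemma in_M2N f : M2 f -> M2 (- f).
Proof. by rewrite -mulN1r; apply: in_M2Ml. Qed.

Lemma in_M2_commgen_sum (g : 'I_r -> 'I_r -> mon r -> mon r -> P) :
  M2 (\sum_(a < r) \sum_(b < r) \sum_(u <- enum_fset B) \sum_(j <- enum_fset B)
        g a b u j * commgen k B a b u j).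
Proof.
exists g, (fun _ _ => 0); rewrite [X in _ + X]big1 ?addr0 // => i _.
by rewrite big1 // => l _; rewrite !mul0r.
Qed.

Lemma in_M2_quad (q : 'I_(nvars B) -> 'I_(nvars B) -> P) :
  M2 (\sum_i \sum_l q i l * 'X_i * 'X_l).
Proof.
exists (fun _ _ _ _ => 0), q; rewrite [X in X + _]big1 ?add0r // => a _.
rewrite big1 // => b _; rewrite big1 // => u _; rewrite big1 // => j _.
by rewrite mul0r.
Qed.

Lemma in_M2_0 : M2 0.
Proof.
by have := in_M2_quad (fun _ _ => 0); rewrite big1 // => i _; rewrite big1 // => l _;
  rewrite !mul0r.
Qed.

Lemma in_M2_sum (I : eqType) (s : seq I) (F : I -> P) :
  (forall i, i \in s -> M2 (F i)) -> M2 (\sum_(i <- s) F i).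
Proof.
elim: s => [|x s IH] Fs; first by rewrite big_nil; apply: in_M2_0.
rewrite big_cons; apply: in_M2D; first by apply: Fs; rewrite mem_head.
by apply: IH => i si; apply: Fs; rewrite inE si orbT.
Qed.

Lemma in_M2_commgen a b (u j : mon r) : u \in B -> j \in B -> M2 (commgen k B a b u j).
Proof.
move=> uB jB.
have := in_M2_commgen_sum (fun a' b' u' j' => ((a', b', u', j') == (a, b, u, j))%:R).
congr M2; rewrite (sum_seq_single (index_enum_uniq _) (mem_index_enum a)) => [|a' _ aN].
  rewrite (sum_seq_single (index_enum_uniq _) (mem_index_enum b)) => [|b' _ bN].
    rewrite (sum_seq_single (fset_uniq B) uB) => [|u' _ uN].
      rewrite (sum_seq_single (fset_uniq B) jB) => [|j' _ jN]; first by rewrite eqxx mul1r.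
      by rewrite !xpair_eqE (negbTE jN) !andbF mul0r.
    by rewrite big1 // => j' _; rewrite !xpair_eqE (negbTE uN) !andbF mul0r.
  rewrite big1 // => u' _; rewrite big1 // => j' _.
  by rewrite !xpair_eqE (negbTE bN) !andbF mul0r.
rewrite big1 // => b' _; rewrite big1 // => u' _; rewrite big1 // => j' _.
by rewrite !xpair_eqE (negbTE aN) mul0r.
Qed.

Lemma in_M2_mul f g : in_m f -> in_m g -> M2 (f * g).
Proof.
case=> hf -> [hg ->]; have := in_M2_quad (fun i l => hf i * hg l).
congr M2; rewrite mulr_suml; apply: eq_bigr => i _; rewrite mulr_sumr.
by apply: eq_bigr => l _; rewrite mulrACA mulrA.
Qed.

End CotangentRelations.

Section TranslationRelations.
Variables (k : fieldType) (r : nat) (B : {fset mon r}).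
Hypothesis basisB : basis_set B.
Local Notation P := (Pring k B).
Local Notation M2 := (in_M2 k B).

Definition vcongr (v w : mon r -> P) : Prop := forall j, j \in B -> M2 (v j - w j).

Lemma vcongr_refl v : vcongr v v.
Proof. by move=> j _; rewrite subrr; apply: in_M2_0. Qed.

Lemma vcongr_sym v w : vcongr v w -> vcongr w v.
Proof. by move=> vw j jB; rewrite -opprB; apply/in_M2N/vw. Qed.

Lemma vcongr_trans v w x : vcongr v w -> vcongr w x -> vcongr v x.
Proof.
by move=> vw wx j jB; rewrite -(subrKA (w j)); apply: in_M2D; [apply: vw|apply: wx].
Qed.

Lemma mulx_vcongr l v w : vcongr v w -> vcongr (mulx k B l v) (mulx k B l w).
Proof.
move=> vw j jB; rewrite /mulx -sumrB; apply: in_M2_sum => b bB.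
by rewrite -mulrBl mulrC; apply/in_M2Ml/vw.
Qed.

Lemma mulx2E a b v (j : mon r) : mulx k B a (mulx k B b v) j =
  \sum_(u <- enum_fset B) v u *
     \sum_(b' <- enum_fset B) mulcoef k B b u b' * mulcoef k B a b' j.
Proof.
rewrite /mulx; under eq_bigr => b' _ do rewrite mulr_suml.
rewrite exchange_big /=; apply: eq_bigr => u _; rewrite mulr_sumr.
by apply: eq_bigr => b' _; rewrite mulrA.
Qed.

Lemma mulxC_vcongr a b v :
  vcongr (mulx k B a (mulx k B b v)) (mulx k B b (mulx k B a v)).
Proof.
have unitvE c d u j : u \in B -> mulx k B c (mulx k B d (unitv k B u)) j =
    \sum_(b' <- enum_fset B) mulcoef k B d u b' * mulcoef k B c b' j.
  move=> uB; rewrite mulx2E (sum_seq_single (fset_uniq B) uB) ?/unitv ?eqxx ?mul1r //.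
  by move=> x _ /negbTE->; rewrite mul0r.
move=> j jB; rewrite !mulx2E -sumrB; apply: in_M2_sum => u uB.
by rewrite -mulrBr; apply: in_M2Ml; rewrite -!unitvE //; apply: in_M2_commgen.
Qed.

Lemma mulx_iter_vcongr i l n v :
  vcongr (mulx k B i (iter n (mulx k B l) v)) (iter n (mulx k B l) (mulx k B i v)).
Proof.
elim: n => [|n IH] /=; first exact: vcongr_refl.
by apply: vcongr_trans (mulxC_vcongr _ _ _) _; apply: mulx_vcongr.
Qed.

Lemma eq_nform_seq (d d' : mon r) s : {in s, d =1 d'} ->
  nform_seq k B d s = nform_seq k B d' s.
Proof.
elim: s => //= l s IH dd'; rewrite dd' ?mem_head // IH // => x xs.
by apply: dd'; rewrite inE xs orbT.
Qed.

Lemma nform_seq_madd (d : mon r) i s : uniq s -> i \in s ->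
  vcongr (nform_seq k B (madd d i) s) (mulx k B i (nform_seq k B d s)).
Proof.
have maddE l : l != i -> madd d i l = d l by rewrite ffunE => /negbTE->; rewrite addn0.
elim: s => //= l s IH /andP[lNs s_uniq]; rewrite inE => /predU1P[il|i_s].
  subst l; rewrite madd_self (@eq_nform_seq (madd d i) d); first exact: vcongr_refl.
  by move=> x xs; apply: maddE; apply: contraNneq lNs => <-.
rewrite maddE; last by apply: contraNneq lNs => ->.
apply: vcongr_trans (vcongr_sym (mulx_iter_vcongr _ _ _ _)).
move: (IH s_uniq i_s); elim: (d l) => //= n IHn /IHn; apply: mulx_vcongr.
Qed.

Lemma nform_madd (d : mon r) i : vcongr (nform k B (madd d i)) (mulx k B i (nform k B d)).
Proof. exact: nform_seq_madd (enum_uniq _) (mem_enum _ _). Qed.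

(* For phi = 0 the tangent evaluation is evaluation at t_beta, where the normal
   form of x^d, d outside beta, has no constant term. *)
Lemma nform_in_m (d b : mon r) : d \notin B -> b \in B -> in_m (nform k B d b).
Proof.
move=> dB bB; have [h ->] := mpoly_coef0_decomp (nform k B d b).
pose zero (t : mon r * mon r) : k := 0.
have zero_translate m l (j : mon r) : m \notin B -> j \in B ->
    zero (madd m l, j) = if (0 < j l)%N then zero (m, msub j l) else 0.
  by rewrite if_same.
have [nf0 _] :=
  tangent_lift_nform basisB (fun t _ => erefl : zero t = 0) zero_translate d bB.
rewrite tangent_coef0 in nf0; rewrite nf0; case: eqP => [db|_].
  by move: dB; rewrite db bB.
by exists h; rewrite mpolyC0 add0r.
Qed.

Lemma mulx_nform (d : mon r) i (j : mon r) : d \notin B -> j \in B ->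
  M2 (mulx k B i (nform k B d) j - if (0 < j i)%N then nform k B d (msub j i) else 0).
Proof.
move=> dB jB; rewrite -(sum_madd_eq basisB (nform k B d) i jB) /mulx -sumrB.
apply: in_M2_sum => b bB; rewrite /mulcoef; case: ifP => biB.
  by case: eqP => _; rewrite ?mulr1 ?mulr0 subrr; apply: in_M2_0.
have -> : (madd b i == j) = false by apply/eqP => bij; move: biB; rewrite bij jB.
by rewrite subr0; apply: in_M2_mul; [apply: nform_in_m | apply: in_m_varP].
Qed.

Lemma cfun_madd (d : mon r) i (j : mon r) : d \notin B -> j \in B ->
  M2 (cfun k B (madd d i, j) - if (0 < j i)%N then cfun k B (d, msub j i) else 0).
Proof.
move=> dB jB; rewrite /cfun /= -(subrKA (mulx k B i (nform k B d) j)).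
by apply: in_M2D; [apply: nform_madd | have := mulx_nform i dB jB; case: ifP].
Qed.

Lemma tstep_M2 t t' : tstep B t t' -> M2 (cfun k B t - cfun k B t').
Proof.
have up (d j : mon r) i : arrow B (d, j) -> arrow B (madd d i, madd j i) ->
    M2 (cfun k B (madd d i, madd j i) - cfun k B (d, j)).
  by case/andP=> dB _ /andP[_ jB]; have := cfun_madd i dB jB; rewrite madd_self maddK.
case: t t' => [d j] [d' j'] [tA [t'A [i [[/= dE jE]|[/= dE jE]]]]]; subst.
  by rewrite -opprB; apply/in_M2N/up.
exact: up.
Qed.

Lemma tequiv_M2 t t' : tequiv B t t' -> M2 (cfun k B t - cfun k B t').
Proof.
elim=> [x y /tstep_M2 //|x|x y z _ xy _ yz]; first by rewrite subrr; apply: in_M2_0.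
by rewrite -(subrKA (cfun k B y)); apply: in_M2D.
Qed.

Lemma sim0_M2 s : arrow B s -> sim0 B s -> M2 (cfun k B s).
Proof.
move=> sA [[d j] [ss' [i [/= j_i [d_i dNB]]]]].
have /andP[_ jB] := tequiv_arrow ss' sA.
have := cfun_madd i dNB jB; rewrite msubK // j_i subr0 => dj.
by rewrite -(subrK (cfun k B (d, j)) (cfun k B s)); apply: in_M2D => //; apply: tequiv_M2.
Qed.

End TranslationRelations.

Section Necessity.
Variables (k : fieldType) (r : nat) (B : {fset mon r}) (S : {fset mon r * mon r}).
Hypothesis indS : indep_cotangent k B S.

Lemma sum_delta_cfun s : s \in S ->
  \sum_(t <- enum_fset S) ((t == s)%:R : k) *: cfun k B t = cfun k B s.
Proof.
move=> sS; rewrite (sum_seq_single (fset_uniq S) sS) ?eqxx ?scale1r //.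
by move=> t _ /negbTE->; rewrite scale0r.
Qed.

Lemma indep_cotangent_cfun s : s \in S -> ~ in_M2 k B (cfun k B s).
Proof.
move=> sS; rewrite -(sum_delta_cfun sS) => /indS/(_ s sS).
by rewrite eqxx; apply/eqP/oner_neq0.
Qed.

Lemma indep_cotangent_cfunB s1 s2 : s1 \in S -> s2 \in S -> s1 <> s2 ->
  ~ in_M2 k B (cfun k B s1 - cfun k B s2).
Proof.
move=> s1S s2S /eqP s12; rewrite -(sum_delta_cfun s1S) -(sum_delta_cfun s2S) -sumrB.
under eq_bigr => t _ do rewrite -scalerBl.
by move=> /indS/(_ s1 s1S); rewrite eqxx (negbTE s12) subr0; apply/eqP/oner_neq0.
Qed.

End Necessity.

Unset Implicit Arguments.
Close Scope ring_scope.

Theorem theorem3p2 (k : closedFieldType) (r : nat) (B : {fset mon r})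
  (S : {fset mon r * mon r}) :
  basis_set B ->
  (forall s, s \in S -> arrow B s) ->
  (indep_cotangent k B S <->
   ((forall s, s \in S -> ~ sim0 B s) /\
    (forall s1 s2, s1 \in S -> s2 \in S -> s1 <> s2 -> ~ tequiv B s1 s2))).
Proof.
move=> basisB S_arrow; split=> [indS|[S_not0 S_apart]]; last first.
  exact: indep_cotangent_of_classes.
split=> [s sS /(sim0_M2 k basisB (S_arrow s sS))|s1 s2 s1S s2S s12 /(tequiv_M2 k basisB)].
  exact: (indep_cotangent_cfun indS sS).
exact: (indep_cotangent_cfunB indS s1S s2S s12).
Qed.
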